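(* Let $n \geqslant 14$ be an integer and let $X = \mathrm{A}_n$ or $X = \mathrm{S}_n$. Let $p_{\mathrm{intrans}}(X)$ denote the probability that two elements of $X$, chosen independently and uniformly at random, generate a subgroup contained in some intransitive maximal subgroup of $X$. Then $$p_{\mathrm{intrans}}(X) < \frac{1}{n} + \frac{2.7}{n^2}.$$
   Context: $\mathrm{S}_n$ and $\mathrm{A}_n$ denote the symmetric and alternating groups of degree $n$, acting naturally on $\{1,\dots,n\}$; ''intransitive'' refers to this natural action. *)

From HB Require Import structures.
From mathcomp Require Import all_boot all_order all_algebra all_fingroup all_solvable.
Set Implicit Arguments. Unset Strict Implicit. Unset Printing Implicit Defensive.
Import GRing.Theory Num.Theory.

Definition intrans_maximal (n : nat) (X M : {set {perm 'I_n}}) : bool :=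
  maximal M X && ~~ [transitive M, on [set: 'I_n] | 'P].

Definition intrans_pairs (n : nat) (X : {set {perm 'I_n}}) :
    {set {perm 'I_n} * {perm 'I_n}} :=
  [set xy in setX X X |
    [exists M : {group {perm 'I_n}},
        intrans_maximal X M && (<<[set xy.1; xy.2]>>%g \subset M)]].

Definition p_intrans (n : nat) (X : {set {perm 'I_n}}) : rat :=
  (#|intrans_pairs X|%:R / (#|X| ^ 2)%:R)%R.

From mathcomp Require Import all_boot all_order all_algebra all_fingroup all_solvable.
From mathcomp Require Import zify lra.
Set Implicit Arguments.
Unset Strict Implicit.
Unset Printing Implicit Defensive.
Import Order.TTheory GRing.Theory Num.Theory.

(* If <x, y> lies in an intransitive subgroup, it has an orbit O with
   1 <= |O| = k <= n/2; x and y normalise O and, unless k = 1, do not both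
   act trivially on it. The restriction map to Sym(O) has fibres that are
   cosets of the pointwise stabiliser of O, of order (n - k)! |X| / n!, so
   the pairs attached to O number at most (k!^2 - 1) ((n - k)! |X| / n!)^2.
   Summing over O gives p_intrans(X) <= 1/n + 3/(4 C(n,2)) + sum_{3 <= k <= n/2}
   1/C(n,k), and the estimate C(n,k) >= C(14,k) (n/14)^2 on each term
   (together with C(n,k) >= C(n,7) for 7 <= k <= n/2) gives the bound. *)

Lemma leq_card_bigcup (I T : finType) (P : pred I) (F : I -> {set T}) :
  #|\bigcup_(i | P i) F i| <= \sum_(i | P i) #|F i|.
Proof.
elim/big_rec2: _ => [|i m A _ leAm]; first by rewrite cards0.
by rewrite cardsU (leq_trans (leq_subr _ _)) ?leq_add2l.
Qed.

Lemma small_orbit n (H : {group {perm 'I_n}}) i :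
  orbit 'P H i != [set: 'I_n] -> exists j, #|orbit 'P H j|.*2 <= n.
Proof.
move=> ntr; have [small|large] := leqP (#|orbit 'P H i|.*2) n; first by exists i.
have /set0Pn[j jC] : ~: orbit 'P H i != set0.
  by apply: contra ntr => /eqP e; rewrite -[orbit _ _ _]setCK e setC0.
exists j; have disj : orbit 'P H j \subset ~: orbit 'P H i.
  apply/subsetP => z zj; rewrite inE (orbit_transl _ zj).
  by move: jC; rewrite inE.
have := subset_leq_card disj; have := cardsC (orbit 'P H i); rewrite card_ord.
lia.
Qed.

Definition small_sets n := [set O : {set 'I_n} | (0 < #|O|) && (#|O|.*2 <= n)].

(* Pairs of permutations of a k-set other than the identity pair; for k = 1
   the identity pair is counted, as a fixed point is an orbit of size 1. *)
Definition restr_count k := (k`! ^ 2 - (k != 1))%N.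

Section IntransitivePairs.
Variables (n : nat) (G : {group {perm 'I_n}}).

Definition pstab (O : {set 'I_n}) := G :&: [set s | perm_on (~: O) s].

Definition orbit_pairs (O : {set 'I_n}) : {set {perm 'I_n} * {perm 'I_n}} :=
  [set xy in setX G G | [&& xy.1 \in 'N(O | 'P)%g, xy.2 \in 'N(O | 'P)%g &
     (#|O| == 1) || ((restr_perm O xy.1 != 1%g) || (restr_perm O xy.2 != 1%g))]].

Lemma intrans_pairs_cover xy : 0 < n ->
  xy \in intrans_pairs G -> exists2 O, O \in small_sets n & xy \in orbit_pairs O.
Proof.
move=> n_gt0; rewrite inE => /andP[xyG /existsP[M /andP[/andP[_ ntrM] sHM]]].
set H := <<[set xy.1; xy.2]>>%g in sHM *.
have ntrH : orbit 'P H (Ordinal n_gt0) != [set: 'I_n].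
  apply: contra ntrM => /eqP trH; apply/imsetP; exists (Ordinal n_gt0) => //.
  by apply/eqP; rewrite eqEsubset subsetT -trH imsetS.
have [j smallj] := small_orbit ntrH.
have jO := orbit_refl 'P H j.
exists (orbit 'P H j); first by rewrite inE smallj andbT card_gt0; apply/set0Pn; exists j.
have xH : xy.1 \in H by apply: mem_gen; rewrite !inE eqxx.
have yH : xy.2 \in H by apply: mem_gen; rewrite !inE eqxx orbT.
have nOH := subsetP (acts_orbit 'P j (subsetT H)).
rewrite inE xyG nOH // nOH //=.
apply/negPn/negP; rewrite !negb_or !negbK => /and3P[ntriv /eqP rx /eqP ry].
have : j \in 'Fix_('P)(H)%g.
  rewrite afix_gen; apply/afixP => a; rewrite !inE => /orP[] /eqP ->.
    by change (xy.1 j = j); rewrite -(restr_permE (nOH _ xH) jO) rx perm1.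
  by change (xy.2 j = j); rewrite -(restr_permE (nOH _ yH) jO) ry perm1.
by move/orbit1P => e; move: ntriv; rewrite e cards1.
Qed.

Lemma card_restr_fibre (O : {set 'I_n}) s :
  #|[set x in G | (x \in 'N(O | 'P)%g) && (restr_perm O x == s)]| <= #|pstab O|.
Proof.
set F := [set x in G | _].
have [/set0Pn[x0 Fx0] | /negPn/eqP ->] := boolP (F != set0); last by rewrite cards0.
rewrite -(card_rcoset (pstab O) x0); apply: subset_leq_card; apply/subsetP => x Fx.
move: Fx0 Fx; rewrite inE => /and3P[Gx0 Nx0 /eqP rx0].
rewrite inE => /and3P[Gx Nx /eqP rx].
rewrite mem_rcoset !inE groupM ?groupV //=.
apply/subsetP => i; rewrite !inE; apply: contraNN => iO.
by rewrite permM -(restr_permE Nx iO) rx -rx0 (restr_permE Nx0 iO) -permM mulgV perm1.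
Qed.

Lemma card_restr_pairs (O : {set 'I_n}) :
  #|[set st : {perm 'I_n} * {perm 'I_n} | [&& perm_on O st.1, perm_on O st.2 &
     (#|O| == 1) || ((st.1 != 1%g) || (st.2 != 1%g))]]| <= restr_count #|O|.
Proof.
set A := [set st | _]; set P := [set s | perm_on O s].
have cardP : #|P| = #|O|`! by rewrite cardsE card_perm.
have sAP : A \subset setX P P by apply/subsetP => st; rewrite !inE => /and3P[-> -> _].
rewrite /restr_count; case: eqP => [_|O_neq1] /=.
  by rewrite subn0 (leq_trans (subset_leq_card sAP)) // cardsX cardP.
have sAP1 : A \subset setX P P :\ (1%g, 1%g).
  apply/subsetP => st; rewrite !inE /= => /and3P[-> -> /orP[/eqP //|]].
  by case: st => a b /=; rewrite xpair_eqE negb_and => ->.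
apply: leq_trans (subset_leq_card sAP1) _.
have := cardsD1 (1%g, 1%g) (setX P P); rewrite cardsX cardP !inE /= !perm_on1 /=.
by rewrite expnS expn1 => ->; rewrite addKn.
Qed.

Lemma card_orbit_pairs (O : {set 'I_n}) :
  #|orbit_pairs O| <= restr_count #|O| * #|pstab O| ^ 2.
Proof.
set A := [set st : {perm 'I_n} * {perm 'I_n} | [&& perm_on O st.1, perm_on O st.2 &
     (#|O| == 1) || ((st.1 != 1%g) || (st.2 != 1%g))]].
set F := fun s => [set x in G | (x \in 'N(O | 'P)%g) && (restr_perm O x == s)].
apply: (@leq_trans (\sum_(st in A) #|F st.1| * #|F st.2|)).
  rewrite -sum1_card (partition_big
    (fun xy => (restr_perm O xy.1, restr_perm O xy.2)) (mem A)); last first.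
    move=> xy; rewrite /= inE => /andP[_ /and3P[Nx Ny ntriv]].
    by rewrite inE /= !restr_perm_on.
  apply: leq_sum => st _; rewrite sum1dep_card -cardsX; apply: subset_leq_card.
  apply/subsetP => xy; rewrite !inE => /andP[/and4P[/andP[Gx Gy] Nx Ny _] /eqP <-].
  by rewrite Gx Gy Nx Ny !eqxx.
apply: (@leq_trans (\sum_(st in A) #|pstab O| ^ 2)).
  by apply: leq_sum => st _; rewrite expnS expn1 leq_mul ?card_restr_fibre.
by rewrite sum_nat_const leq_mul2r card_restr_pairs orbT.
Qed.

Lemma sum_small_sets (g : nat -> nat) :
  \sum_(O in small_sets n) g #|O| =
  \sum_(k < n.+1 | (0 < k) && (k.*2 <= n)) 'C(n, k) * g k.
Proof.
have cardO (O : {set 'I_n}) : #|O| < n.+1.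
  by rewrite ltnS (leq_trans (max_card _)) ?card_ord.
rewrite (partition_big (fun O : {set 'I_n} => inord #|O| : 'I_n.+1)
   (fun k : 'I_n.+1 => (0 < k) && (k.*2 <= n))); last first.
  by move=> O; rewrite inE inordK.
apply: eq_bigr => k /andP[k_gt0 k_small].
rewrite (eq_bigr (fun _ => g k)); last by move=> O /andP[_ /eqP <-]; rewrite inordK.
rewrite sum_nat_const -[X in 'C(X, _)](card_ord n) -card_draws; congr (_ * _).
apply: eq_card => O; rewrite !inE; apply/andP/eqP => [[_ /eqP <-]|cardOk].
  by rewrite inordK.
split; last by apply/eqP/val_inj; rewrite /= inordK cardOk.
by rewrite inE cardOk k_gt0 k_small.
Qed.

Hypothesis card_pstab : forall O, O \in small_sets n ->
  #|pstab O| * n`! = (n - #|O|)`! * #|G|.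

Lemma card_intrans_pairs_le : 0 < n ->
  #|intrans_pairs G| * n`! ^ 2 <=
  (\sum_(k < n.+1 | (0 < k) && (k.*2 <= n))
     'C(n, k) * (restr_count k * (n - k)`! ^ 2)) * #|G| ^ 2.
Proof.
move=> n_gt0.
have sub : intrans_pairs G \subset \bigcup_(O in small_sets n) orbit_pairs O.
  by apply/subsetP => xy /intrans_pairs_cover[// | O OS xyO]; apply/bigcupP; exists O.
apply: leq_trans (leq_mul (leq_trans (subset_leq_card sub) (leq_card_bigcup _ _))
  (leqnn _)) _.
rewrite -(sum_small_sets (fun k => restr_count k * (n - k)`! ^ 2)) !big_distrl.
apply: leq_sum => O OS; apply: leq_trans (leq_mul (card_orbit_pairs O) (leqnn _)) _.
by rewrite -mulnA -expnMn card_pstab // expnMn mulnA.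
Qed.

End IntransitivePairs.

Lemma card_Alt_perm_on (T : finType) (A : {set T}) : 1 < #|A| ->
  2 * #|Alt T :&: [set s | perm_on A s]| = #|A|`!.
Proof.
move=> A_gt1.
have [a [b [aA bA ab]]] : exists a b, [/\ a \in A, b \in A & a != b].
  have /card_gt0P[a aA] : 0 < #|A| by lia.
  have /card_gt0P[b] : 0 < #|A :\ a| by rewrite (cardsD1 a A) aA in A_gt1; lia.
  by rewrite !inE => /andP[ba bA]; exists a, b; rewrite eq_sym.
set t := tperm a b; set P := [set s | perm_on A s].
have tA : perm_on A t.
  apply: subset_trans (tperm_on a b) _; apply/subsetP => x.
  by rewrite !inE => /orP[] /eqP ->.
have oddP : P :\: Alt T = ((P :&: Alt T) :* t)%g.
  apply/setP => x; rewrite mem_rcoset in_setD [_ \in P :&: _]in_setI !Alt_even.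
  rewrite !inE !odd_permM odd_permV odd_tperm ab.
  case: (boolP (perm_on A x)) => xA /=.
    by rewrite perm_onM ?perm_onV //= addbT !negbK andbT.
  rewrite andbF; apply/esym/negP => /andP[xtA _]; move/negP: xA; apply.
  by rewrite -(mulgKV t x) perm_onM.
have cardP : #|P| = #|A|`! by rewrite cardsE card_perm.
by rewrite -cardP -(cardsID (Alt T) P) oddP card_rcoset setIC mul2n addnn.
Qed.

Lemma cardsC_ord n (O : {set 'I_n}) : #|~: O| = n - #|O|.
Proof. by have := cardsC O; rewrite card_ord; lia. Qed.

Lemma card_pstab_Sym n (O : {set 'I_n}) :
  #|pstab (Sym_group 'I_n) O| * n`! = (n - #|O|)`! * #|Sym_group 'I_n|.
Proof. by rewrite /pstab setTI cardsE card_perm cardsC_ord card_Sym card_ord. Qed.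

Lemma card_pstab_Alt n (O : {set 'I_n}) : 1 < n - #|O| ->
  #|pstab (Alt_group 'I_n) O| * n`! = (n - #|O|)`! * #|Alt_group 'I_n|.
Proof.
move=> O_gt1.
have := @card_Alt_perm_on _ (~: O); rewrite cardsC_ord => <- //.
have := card_Alt (T := 'I_n); rewrite card_ord => <-; last by lia.
by rewrite mulnCA mulnA.
Qed.

Lemma leq_bin_half m k n : m <= k -> k.*2 <= n -> 'C(n, m) <= 'C(n, k).
Proof.
elim: k => [|k IHk]; first by rewrite leqn0 => /eqP ->.
rewrite leq_eqVlt => /orP[/eqP -> // | ]; rewrite ltnS => le_mk k_small.
apply: leq_trans (IHk le_mk _) _; first lia.
rewrite -(@leq_pmul2l k.+1) // mul_bin_left leq_mul2r; apply/orP; right; lia.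
Qed.

Lemma bin_sqr_mono m n k : 1 < k -> k <= m -> m <= n ->
  'C(m, k) * n ^ 2 <= m ^ 2 * 'C(n, k).
Proof.
move=> k_gt1 le_km; elim: n => [|n IHn]; first by rewrite exp0n ?muln0.
rewrite leq_eqVlt => /orP[/eqP <- | ]; first by rewrite mulnC.
rewrite ltnS => le_mn; have := IHn le_mn.
have := mul_bin_down n.+1 k; rewrite /=.
move: ('C(m, k)) ('C(n, k)) ('C(n.+1, k)) (m ^ 2) => c x y M e le_cx.
have k_lt : 0 < n.+1 - k by lia.
rewrite -(leq_pmul2r k_lt).
have le_n2 : n.+1 * (n.+1 - k) <= n ^ 2 by nia.
have := leq_mul (leqnn (c * n.+1)) le_n2.
have := leq_mul le_cx (leqnn n.+1).
nia.
Qed.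

(* (n - 12)/2 bounds the number of 7 <= k <= n/2, each term contributing at
   most 1/C(n, 7). *)
Lemma bin7_tail_lower n : 14 <= n -> 'C(14, 7) * (n - 12) * n ^ 2 <= 392 * 'C(n, 7).
Proof.
elim: n => [//|n IHn]; rewrite leq_eqVlt => /orP[/eqP <-|]; first lia.
rewrite ltnS => n_ge14; have := IHn n_ge14.
have := mul_bin_down n.+1 7; rewrite /=.
move: ('C(14, 7)) ('C(n, 7)) ('C(n.+1, 7)) => c x y e le_cx.
have n7 : 0 < n.+1 - 7 by lia.
rewrite -(leq_pmul2r n7).
have le_n3 : (n.+1 - 12) * n.+1 * (n.+1 - 7) <= (n - 12) * n ^ 2 by nia.
have := leq_mul (leqnn (c * n.+1)) le_n3.
have := leq_mul le_cx (leqnn n.+1).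
nia.
Qed.

Section Estimates.
Local Open Scope ring_scope.

Lemma ler_pdiv_nat (a b c d : nat) : (0 < b)%N -> (0 < d)%N -> (a * d <= c * b)%N ->
  a%:R / b%:R <= c%:R / d%:R :> rat.
Proof.
move=> b_gt0 d_gt0 le_ad_cb.
by rewrite ler_pdivrMr ?ltr0n // mulrAC ler_pdivlMr ?ltr0n // -!natrM ler_nat.
Qed.

Lemma ler_pdiv_nat_sqr (a b c d e : nat) : (0 < b)%N -> (0 < d)%N -> (0 < e)%N ->
  (a * (d * e ^ 2) <= c * b)%N -> a%:R / b%:R <= c%:R / d%:R / e%:R ^+ 2 :> rat.
Proof.
move=> b_gt0 d_gt0 e_gt0 le_ab; rewrite -mulrA -invfM -natrX -natrM.
by apply: ler_pdiv_nat; rewrite ?muln_gt0 ?expn_gt0 ?d_gt0 ?e_gt0.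
Qed.

Definition orbit_term (n k : nat) : rat :=
  ('C(n, k) * restr_count k * (n - k)`! ^ 2)%:R / (n`! ^ 2)%:R.

Lemma p_intrans_le_sum n (G : {group {perm 'I_n}}) : (0 < n)%N ->
  (forall O, O \in small_sets n -> #|pstab G O| * n`! = (n - #|O|)`! * #|G|)%N ->
  p_intrans G <= \sum_(k < n.+1 | (0 < k)%N && (k.*2 <= n)%N) orbit_term n k.
Proof.
move=> n_gt0 card_pstab.
apply: (le_trans (ler_pdiv_nat _ _ (card_intrans_pairs_le card_pstab n_gt0))).
- by rewrite expn_gt0 cardG_gt0.
- by rewrite expn_gt0 fact_gt0.
by rewrite natr_sum mulr_suml; apply: ler_sum => k _; rewrite /orbit_term mulnA.
Qed.

Lemma orbit_term_le n k : (k <= n)%N ->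
  orbit_term n k <= (restr_count k)%:R / ('C(n, k) * k`! ^ 2)%:R.
Proof.
move=> le_kn; apply: ler_pdiv_nat.
- by rewrite expn_gt0 fact_gt0.
- by rewrite muln_gt0 bin_gt0 le_kn expn_gt0 fact_gt0.
by rewrite -(bin_fact le_kn); lia.
Qed.

Lemma orbit_term_le_inv_bin n k : (k <= n)%N -> orbit_term n k <= 1 / ('C(n, k))%:R.
Proof.
move=> le_kn; apply: le_trans (orbit_term_le le_kn) _.
rewrite -[1 in X in _ <= X]/(1%:R); apply: ler_pdiv_nat.
- by rewrite muln_gt0 bin_gt0 le_kn expn_gt0 fact_gt0.
- by rewrite bin_gt0.
by rewrite /restr_count mul1n mulnC leq_mul2l leq_subr orbT.
Qed.

Lemma orbit_term2_le n : (2 <= n)%N ->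
  orbit_term n 2 <= 3%:R / 4%:R * (1 / ('C(n, 2))%:R).
Proof.
move=> n_ge2; apply: le_trans (orbit_term_le n_ge2) _.
rewrite mul1r -mulrA -invfM -natrM; apply: ler_pdiv_nat.
- by rewrite muln_gt0 bin_gt0 n_ge2.
- by rewrite muln_gt0 bin_gt0 n_ge2.
by rewrite /restr_count (_ : 2`! = 2)%N //=; lia.
Qed.

Lemma inv_bin_le n k : (1 < k)%N -> (k <= 14)%N -> (14 <= n)%N ->
  1 / ('C(n, k))%:R <= 196%:R / ('C(14, k))%:R / n%:R ^+ 2 :> rat.
Proof.
move=> k_gt1 k_le14 n_ge14.
rewrite -[1 in X in X <= _]/(1%:R); apply: ler_pdiv_nat_sqr.
- by rewrite bin_gt0; lia.
- by rewrite bin_gt0.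
- lia.
by rewrite mul1n (bin_sqr_mono k_gt1 k_le14 n_ge14).
Qed.

Lemma tail_le n : (14 <= n)%N ->
  \sum_(7 <= k < n./2.+1) orbit_term n k <= 196%:R / ('C(14, 7))%:R / n%:R ^+ 2.
Proof.
move=> n_ge14; have half_ge7 : (7 <= n./2)%N by rewrite geq_half_double.
apply: (le_trans (y := \sum_(7 <= k < n./2.+1) 1 / ('C(n, 7))%:R)).
  apply: ler_sum_nat => k /andP[k_ge7 k_small].
  have le_kn : (k <= n)%N by move: k_small; rewrite ltnS geq_half_double; lia.
  apply: le_trans (orbit_term_le_inv_bin le_kn) _.
  rewrite -[1]/(1%:R); apply: ler_pdiv_nat.
  - by rewrite bin_gt0.
  - by rewrite bin_gt0; lia.
  by rewrite !mul1n leq_bin_half // -geq_half_double -ltnS.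
rewrite sumr_const_nat [X in X <= _](_ : _ = (n./2.+1 - 7)%:R / ('C(n, 7))%:R);
  last by rewrite -mulrnAl.
apply: ler_pdiv_nat_sqr.
- by rewrite bin_gt0; lia.
- by rewrite bin_gt0.
- lia.
have := bin7_tail_lower n_ge14.
have : ((n./2.+1 - 7).*2 <= n - 12)%N by rewrite -{2}(odd_double_half n); lia.
move: ('C(14, 7)) ('C(n, 7)) => c x le_half le_cx.
have := leq_mul le_half (leqnn (c * n ^ 2)).
lia.
Qed.

Lemma sum_orbit_term_lt n : (14 <= n)%N ->
  \sum_(k < n.+1 | (0 < k)%N && (k.*2 <= n)%N) orbit_term n k
    < 1 / n%:R + 27%:R / 10%:R / n%:R ^+ 2.
Proof.
move=> n_ge14; have half_ge7 : (7 <= n./2)%N by rewrite geq_half_double.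
have -> : \sum_(k < n.+1 | (0 < k)%N && (k.*2 <= n)%N) orbit_term n k =
          \sum_(1 <= k < n./2.+1) orbit_term n k.
  rewrite (big_nat_widen _ _ _ _ _ (_ : n./2.+1 <= n.+1)%N); last first.
    by rewrite ltnS -{2}(odd_double_half n); lia.
  by rewrite big_geq_mkord; apply: eq_bigl => k /=; rewrite ltnS geq_half_double andbC.
do 6!(rewrite big_ltn; last lia).
have u_gt0 : 0 < (n%:R ^+ 2)^-1 :> rat by rewrite invr_gt0 exprn_gt0 // ltr0n; lia.
have t1 : orbit_term n 1 <= 1 / n%:R.
  by rewrite -{2}(bin1 n) orbit_term_le_inv_bin //; lia.
have t2 : orbit_term n 2 <= 3%:R / 4%:R * (1 / ('C(n, 2))%:R).
  by apply: orbit_term2_le; lia.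
have bin_le k c : (1 < k)%N -> (k <= 14)%N -> 'C(14, k) = c ->
    1 / ('C(n, k))%:R <= 196%:R / c%:R / n%:R ^+ 2 :> rat.
  by move=> k_gt1 k_le14 <-; apply: inv_bin_le.
have tk k c : (2 < k)%N -> (k <= 14)%N -> 'C(14, k) = c ->
    orbit_term n k <= 196%:R / c%:R / n%:R ^+ 2.
  move=> k_gt2 k_le14 Ck.
  by apply: le_trans (orbit_term_le_inv_bin _) (bin_le _ _ _ _ Ck); lia.
have b2 := bin_le 2 91 isT isT (erefl _).
have t3 := tk 3 364 isT isT (erefl _).
have t4 := tk 4 1001 isT isT (erefl _).
have t5 := tk 5 2002 isT isT (erefl _).
have t6 := tk 6 3003 isT isT (erefl _).
have tail := tail_le n_ge14; rewrite (erefl : 'C(14, 7) = 3432)%N in tail.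
lra.
Qed.

End Estimates.

Local Open Scope ring_scope.

Theorem lemma2p2 (n : nat) (X : {set {perm 'I_n}}) :
  (14 <= n)%N ->
  X = Alt 'I_n \/ X = Sym 'I_n ->
  p_intrans X < 1 / n%:R + (27%:R / 10%:R) / (n%:R ^+ 2) :> rat.
Proof.
move=> n_ge14 XAS; have n_gt0 : (0 < n)%N by lia.
have [G -> card_pstab] : exists2 G : {group {perm 'I_n}}, X = G &
    forall O, O \in small_sets n -> (#|pstab G O| * n`! = (n - #|O|)`! * #|G|)%N.
  case: XAS => ->; [exists (Alt_group 'I_n) | exists (Sym_group 'I_n)] => // O.
    by rewrite inE => /andP[_ O_small]; apply: card_pstab_Alt; lia.
  by move=> _; apply: card_pstab_Sym.
exact: le_lt_trans (p_intrans_le_sum n_gt0 card_pstab) (sum_orbit_term_lt n_ge14).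
Qed.
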